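(* Let $N_1=(V_1,E_1)$ and $N_2=(V_2,E_2)$ be phylogenetic networks on the same set $S$ of taxa. For every $v_1\in V_1$ and $v_2\in V_2$, if $\ell(v_1)=\ell(v_2)$, then $\mu(v_1)=\mu(v_2)$.
   Context: A phylogenetic network on $S=\{1,\dots,n\}$ is a finite rooted directed acyclic graph whose leaves are bijectively labeled by $S$. For a node $v$ and $i\in S$, $m_i(v)$ is the number of distinct directed paths from $v$ to the leaf $i$, and $\mu(v)=(m_1(v),\dots,m_n(v))$. The nested label $\ell(v)$ is defined by induction on height (largest length of a path to a leaf): $\ell(v)=\{i\}$ for the leaf labeled $i$, and otherwise $\ell(v)$ is the multiset of nested labels of the children of $v$. *)

From Stdlib Require Import List Permutation.
From mathcomp Require Import all_boot.
Set Implicit Arguments. Unset Strict Implicit. Unset Printing Implicit Defensive.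

(* A network: vertex set V (a finType), edge relation e (u -> v iff e u v),
   leaf labelling lbl : V -> 'I_n (taxa {1..n} represented as 0..n-1). *)

Definition is_leaf (V : finType) (e : rel V) (v : V) : bool :=
  ~~ [exists u, e v u].

Definition phylo_network (n : nat) (V : finType) (e : rel V) (lbl : V -> 'I_n) : Prop :=
  [/\ (forall u v, e u v -> ~~ connect e v u),
      (exists r : V, forall v, connect e r v),
      {in is_leaf e &, injective lbl} &
      (forall i : 'I_n, exists2 v, is_leaf e v & lbl v = i)].

(* number of distinct directed paths from v to w: a directed path in a DAG
   has fewer than #|V| edges; a path is the sequence of vertices after v *)
Definition npaths (V : finType) (e : rel V) (v w : V) : nat :=
  \sum_(k < #|V|) #|[set t : k.-tuple V | path e v t && (last v t == w)]|.

Definition mu (n : nat) (V : finType) (e : rel V) (lbl : V -> 'I_n) (v : V)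
  : {ffun 'I_n -> nat} :=
  [ffun i => \sum_(w | is_leaf e w && (lbl w == i)) npaths e v w].

(* nested labels: finite rooted trees; node children form a multiset *)
Inductive nlabel : Type :=
| NLeaf : nat -> nlabel
| NNode : list nlabel -> nlabel.

Inductive nl_eq : nlabel -> nlabel -> Prop :=
| nl_eq_leaf i : nl_eq (NLeaf i) (NLeaf i)
| nl_eq_node (s t t' : list nlabel) :
    Permutation t t' -> Forall2 nl_eq s t' -> nl_eq (NNode s) (NNode t).

(* ell with fuel k; correct whenever k > height of v (k = #|V| suffices in a DAG) *)
Fixpoint ell_fuel (n : nat) (V : finType) (e : rel V) (lbl : V -> 'I_n) (k : nat) (v : V)
  : nlabel :=
  match k with
  | 0 => NNode nil
  | k'.+1 => if is_leaf e v then NLeaf (val (lbl v)).+1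
             else NNode [seq ell_fuel e lbl k' u | u <- enum [pred u | e v u]]
  end.

Definition ell (n : nat) (V : finType) (e : rel V) (lbl : V -> 'I_n) (v : V) : nlabel :=
  ell_fuel e lbl #|V| v.

From Stdlib Require Import List Permutation.
From mathcomp Require Import all_boot.

Set Implicit Arguments. Unset Strict Implicit. Unset Printing Implicit Defensive.

(* The path-count vector obeys the same recursion as the nested label: at a
   leaf, mu is the indicator of its label, and at an internal node v every
   path leaves v through exactly one child, so mu(v) is the sum of mu over the
   children of v.  Equality of nested labels provides a bijection between the
   children of v1 and v2 matching equal labels, so by induction on the height
   the corresponding sums, hence mu(v1) and mu(v2), coincide. *)

Lemma In_mem (T : eqType) (x : T) (s : seq T) : In x s -> x \in s.
Proof. by elim: s => //= y s IH [-> | /IH xs]; rewrite inE ?eqxx ?xs ?orbT. Qed.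

Lemma map_List_map (A B : Type) (f : A -> B) (s : seq A) : map f s = List.map f s.
Proof. by elim: s => //= x s ->. Qed.

Lemma Forall2_map_in (A B C D : Type) (R : C -> D -> Prop) (P : A -> B -> Prop)
    (f : A -> C) (g : B -> D) (s : list A) (t : list B) :
  (forall x y, In x s -> In y t -> R (f x) (g y) -> P x y) ->
  Forall2 R (List.map f s) (List.map g t) -> Forall2 P s t.
Proof.
elim: s t => [|x s IH] [|y t] RP F; inversion F; subst; constructor.
  by apply: RP => //=; left.
by apply: IH => // a b sa tb; apply: RP; right.
Qed.

Section BigLists.
Variables (R : Type) (idx : R) (op : Monoid.com_law idx).

Lemma big_Forall2 (A B : Type) (F : A -> R) (G : B -> R) (s : list A) (t : list B) :
  Forall2 (fun x y => F x = G y) s t ->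
  \big[op/idx]_(x <- s) F x = \big[op/idx]_(y <- t) G y.
Proof. by elim=> [|x y s' t' Fxy _ IH]; rewrite ?big_nil // !big_cons Fxy IH. Qed.

Lemma big_Permutation (A : Type) (F : A -> R) (s t : list A) :
  Permutation s t -> \big[op/idx]_(x <- s) F x = \big[op/idx]_(x <- t) F x.
Proof.
elim=> [|x s' t' _ IH|x y s'|s1 s2 s3 _ IH12 _ IH23]; rewrite ?big_cons //.
- by rewrite IH.
- by rewrite Monoid.mulmCA.
- by rewrite IH12 IH23.
Qed.

Lemma big_tupleS (T : finType) m (F : m.+1.-tuple T -> R) :
  \big[op/idx]_(t : m.+1.-tuple T) F t =
  \big[op/idx]_(x : T) \big[op/idx]_(t : m.-tuple T) F [tuple of x :: t].
Proof.
rewrite pair_big (reindex (fun p : T * m.-tuple T => [tuple of p.1 :: p.2])) //=.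
exists (fun t : m.+1.-tuple T => (thead t, [tuple of behead t])).
  by move=> [x t] _; rewrite theadE; congr pair; apply: val_inj.
by move=> t _; rewrite [in RHS](tuple_eta t).
Qed.

End BigLists.

Section Paths.
Variables (V : finType) (e : rel V).
Hypothesis acyclic : forall u v, e u v -> ~~ connect e v u.

Lemma acyclic_path_uniq v t : path e v t -> uniq (v :: t).
Proof.
elim: t v => [|u t IH] v // /andP[evu pu].
rewrite cons_uniq (IH u pu) andbT; apply/negP => vt.
by have := path_connect pu vt; rewrite (negbTE (acyclic evu)).
Qed.

Lemma acyclic_path_size v t : path e v t -> size t < #|V|.
Proof.
move/acyclic_path_uniq/card_uniqP => card_vt.
by rewrite -[_ < _]/(size (v :: t) <= _) -card_vt max_card.
Qed.

Definition npaths_len m v w : nat :=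
  #|[set t : m.-tuple V | path e v t && (last v t == w)]|.

Lemma npaths_lenE m v w :
  npaths_len m v w = \sum_(t : m.-tuple V) (path e v t && (last v t == w)).
Proof.
rewrite /npaths_len cardsE -sum1_card big_mkcond; apply: eq_bigr => t _.
by rewrite unfold_in; case: (_ && _).
Qed.

Lemma npaths_len0 v w : npaths_len 0 v w = (v == w).
Proof.
rewrite npaths_lenE (big_pred1 [tuple]) => [|t]; first by rewrite /= eq_sym.
by apply/esym/eqP; apply: tuple0.
Qed.

Lemma npaths_lenS m v w : npaths_len m.+1 v w = \sum_(u | e v u) npaths_len m u w.
Proof.
rewrite npaths_lenE big_tupleS [RHS]big_mkcond; apply: eq_bigr => u _ /=.
by case: (e v u); rewrite ?npaths_lenE // big1.
Qed.

Lemma npaths_len_eq0 m v w : #|V| <= m -> npaths_len m v w = 0.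
Proof.
move=> Vm; rewrite npaths_lenE big1 // => t _.
case pt: (path e v t) => //.
by have := leq_trans (acyclic_path_size pt) Vm; rewrite size_tuple ltnn.
Qed.

Lemma npaths_rec v w : npaths e v w = (v == w) + \sum_(u | e v u) npaths e u w.
Proof.
have -> : npaths e v w = \sum_(0 <= m < #|V|.+1) npaths_len m v w.
  by rewrite big_nat_recr //= npaths_len_eq0 // addn0 big_mkord.
rewrite big_nat_recl // npaths_len0; congr addn.
under eq_bigr do rewrite npaths_lenS.
by rewrite exchange_big; apply: eq_bigr => u _; rewrite big_mkord.
Qed.

Variables (n : nat) (lbl : V -> 'I_n).

Lemma mu_leaf v i : is_leaf e v -> mu e lbl v i = (lbl v == i).
Proof.
move=> leaf_v; have /existsPn no_child := leaf_v; rewrite ffunE.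
have npaths_leaf w : npaths e v w = (v == w).
  by rewrite npaths_rec big_pred0 ?addn0 // => u; apply/negbTE.
under eq_bigr do rewrite npaths_leaf.
rewrite big_mkcond (bigD1 v) //= eqxx big1 => [|w /negbTE]; last first.
  by rewrite eq_sym => ->; case: ifP.
by rewrite leaf_v addn0; case: (lbl v == i).
Qed.

Lemma mu_node v i :
  ~~ is_leaf e v -> mu e lbl v i = \sum_(u <- enum [pred u | e v u]) mu e lbl u i.
Proof.
move=> internal_v; rewrite ffunE.
under eq_bigr do rewrite npaths_rec.
rewrite big_split /= [X in X + _]big1 ?add0n => [|w /andP[leaf_w _]]; last first.
  by case: eqVneq leaf_w internal_v => // <- ->.
by rewrite exchange_big big_enum; apply: eq_bigr => u _; rewrite ffunE.
Qed.

End Paths.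

Lemma nl_eq_NLeaf i j : nl_eq (NLeaf i) (NLeaf j) -> i = j.
Proof. by inversion 1. Qed.

Lemma nl_eq_NNode s t :
  nl_eq (NNode s) (NNode t) -> exists2 t', Permutation t t' & Forall2 nl_eq s t'.
Proof. by inversion 1; exists t'. Qed.

Lemma path_size_child (V : finType) (e : rel V) k v u :
  (forall t, path e v t -> size t < k.+1) -> e v u ->
  forall t, path e u t -> size t < k.
Proof. by move=> short_v evu t pt; apply: (short_v (u :: t)); rewrite /= evu. Qed.

Lemma mu_eq_of_nl_eq_fuel n (V1 : finType) (e1 : rel V1) (lbl1 : V1 -> 'I_n)
    (V2 : finType) (e2 : rel V2) (lbl2 : V2 -> 'I_n) :
  (forall u v, e1 u v -> ~~ connect e1 v u) ->
  (forall u v, e2 u v -> ~~ connect e2 v u) ->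
  forall k1 k2 v1 v2,
  (forall t, path e1 v1 t -> size t < k1) ->
  (forall t, path e2 v2 t -> size t < k2) ->
  nl_eq (ell_fuel e1 lbl1 k1 v1) (ell_fuel e2 lbl2 k2 v2) ->
  mu e1 lbl1 v1 = mu e2 lbl2 v2.
Proof.
move=> acyclic1 acyclic2.
elim=> [|k1 IH] [|k2] v1 v2 short1 short2;
  try by [have := short1 [::] isT | have := short2 [::] isT].
rewrite /=; case: ifP => leaf1; case: ifP => leaf2; try by inversion 1.
  by move=> /nl_eq_NLeaf/succn_inj/val_inj lbl_eq; apply/ffunP => i; rewrite !mu_leaf ?lbl_eq.
set c1 := enum _; set c2 := enum _; rewrite !map_List_map.
case/nl_eq_NNode => _ /Permutation_sym/Permutation_map_inv[c2' [-> perm_c2]] match_ell.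
have mu_match : Forall2 (fun x y => mu e1 lbl1 x = mu e2 lbl2 y) c1 c2'.
  apply: Forall2_map_in match_ell => x y /In_mem + /(Permutation_in _ (Permutation_sym perm_c2)).
  rewrite /c1 !mem_enum => e1x /In_mem; rewrite mem_enum => e2y.
  by apply: IH; apply: path_size_child; eassumption.
apply/ffunP => i; rewrite !mu_node ?leaf1 ?leaf2 // -/c1 -/c2 (big_Permutation _ _ perm_c2).
by apply: big_Forall2; apply: Forall2_impl mu_match => x y ->.
Qed.

Theorem corollary1 (n : nat)
  (V1 : finType) (e1 : rel V1) (lbl1 : V1 -> 'I_n)
  (V2 : finType) (e2 : rel V2) (lbl2 : V2 -> 'I_n) :
  phylo_network e1 lbl1 -> phylo_network e2 lbl2 ->
  forall (v1 : V1) (v2 : V2),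
    nl_eq (ell e1 lbl1 v1) (ell e2 lbl2 v2) -> mu e1 lbl1 v1 = mu e2 lbl2 v2.
Proof.
move=> [acyclic1 _ _ _] [acyclic2 _ _ _] v1 v2.
by apply: mu_eq_of_nl_eq_fuel => // t; apply: acyclic_path_size.
Qed.
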